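(* Let $d\ge4$ and $1\le p<d/2$ be integers. If $\mathbf{a}=(a,(a_{j00},a_{j01},a_{j10},a_{j11})_{j\in[p]})$ is a point on the boundary of $K$ with $a\notin\{0,\tfrac12\}$, then $\mathbf{a}$ is not a local maximum of $\varphi$ on $K$.
   Context: Let $\tau_j=\binom{d}{p}\binom{p}{j}\binom{d-p}{p-j}$ for $0\le j\le p$. Points of $\mathbb{R}^{4p+1}$ are written $\mathbf{z}=(z,(z_{j00},z_{j01},z_{j10},z_{j11})_{j\in[p]})$, with $z_{0\alpha\alpha}=z-\sum_{j\in[p]}z_{j\alpha\alpha}$ ($\alpha\in\{0,1\}$) and $z_{0\alpha\beta}=\frac12-z-\sum_{j\in[p]}z_{j\alpha\beta}$ ($\alpha\ne\beta$). $K$ is the set of $\mathbf{z}$ with $0\le z\le\frac12$ and $z_{j\alpha\beta}\ge0$ for all $0\le j\le p$, $\alpha,\beta\in\{0,1\}$. $A(\mathbf{z})=p+(d-4p)z+\sum_{j\in[p]}j(z_{j00}+z_{j11}-z_{j01}-z_{j10})$, $B=\frac d2-A$, and $\varphi(\mathbf{z})=A\log A+B\log B+\sum_{0\le j\le p,\ \alpha,\beta\in\{0,1\}}(z_{j\alpha\beta}\log\tau_j-z_{j\alpha\beta}\log z_{j\alpha\beta})$, with $0\log0=0$, a continuous function on $K$. *)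

(* R : realType, ln from mathcomp-analysis (ln x = 0 for x <= 0,
   so x * ln x realizes the convention 0 log 0 = 0). *)
From HB Require Import structures.
From mathcomp Require Import all_boot all_order all_algebra.
From mathcomp Require Import reals exp.
Set Implicit Arguments. Unset Strict Implicit. Unset Printing Implicit Defensive.
Import Order.TTheory GRing.Theory Num.Theory.
Local Open Scope ring_scope.

(* A point of R^{4p+1}: (z, w) where w i alpha beta = z_{(i+1) alpha beta},
   i : 'I_p encoding j = i+1 in [p] = {1,...,p}. *)
Definition pt (R : realType) (p : nat) := (R * ('I_p -> bool -> bool -> R))%type.

Section Defs.
Variables (R : realType) (d p : nat).

Definition tau (j : nat) : R := ('C(d, p) * 'C(p, j) * 'C(d - p, p - j))%N%:R.

Definition z0 (x : pt R p) (a b : bool) : R :=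
  if a == b then x.1 - \sum_(i < p) x.2 i a a
  else 1 / 2 - x.1 - \sum_(i < p) x.2 i a b.

Definition inK (x : pt R p) : Prop :=
  [/\ 0 <= x.1, x.1 <= 1 / 2,
      (forall (i : 'I_p) a b, 0 <= x.2 i a b) &
      (forall a b, 0 <= z0 x a b)].

Definition Afun (x : pt R p) : R :=
  p%:R + (d%:R - 4 * p%:R) * x.1
  + \sum_(i < p) (i.+1)%:R *
      (x.2 i false false + x.2 i true true - x.2 i false true - x.2 i true false).

Definition Bfun (x : pt R p) : R := d%:R / 2 - Afun x.

Definition xlnx (t : R) : R := t * ln t.

Definition phi (x : pt R p) : R :=
  xlnx (Afun x) + xlnx (Bfun x)
  + \sum_(a : bool) \sum_(b : bool)
      ((z0 x a b * ln (tau 0) - xlnx (z0 x a b))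
       + \sum_(i < p) (x.2 i a b * ln (tau i.+1) - xlnx (x.2 i a b))).

(* sup-norm ball (induces the Euclidean topology of R^{4p+1}) *)
Definition close (x y : pt R p) (e : R) : Prop :=
  `|x.1 - y.1| < e /\ forall (i : 'I_p) a b, `|x.2 i a b - y.2 i a b| < e.

Definition on_boundaryK (x : pt R p) : Prop :=
  forall e : R, 0 < e ->
    (exists y, close x y e /\ inK y) /\ (exists y, close x y e /\ ~ inK y).

Definition local_max_on_K (x : pt R p) : Prop :=
  inK x /\ exists e : R, 0 < e /\
    forall y, inK y -> close x y e -> phi y <= phi x.

End Defs.

From HB Require Import structures.
From mathcomp Require Import all_boot all_order all_algebra.
From mathcomp Require Import reals sequences exp.
From mathcomp Require Import ring lra.
Set Implicit Arguments. Unset Strict Implicit. Unset Printing Implicit Defensive.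
Import Order.TTheory GRing.Theory Num.Theory.
Local Open Scope ring_scope.

(* A boundary point of K with 0 < a < 1/2 has a vanishing coordinate
   z_{jαβ}, while the block (α, β), whose coordinates sum to a or to 1/2 - a,
   has a positive coordinate z_{kαβ}.  Moving a mass t from z_{kαβ} to z_{jαβ}
   stays in K.  Since A >= (d - 2p) a > 0 and B >= (d - 2p)(1/2 - a) > 0, the
   convexity of x log x shows that every term of φ loses at most O(t), while the
   term -z_{jαβ} log z_{jαβ} gains -t log t, which dominates as t -> 0. *)

Section XlnX.
Variable R : realType.

Lemma ln_le_subr1 (x : R) : 0 < x -> ln x <= x - 1.
Proof. by move=> x_gt0; have := expR_ge1Dx (ln x); rewrite lnK ?posrE; lra. Qed.

Lemma xlnx_tangent_le (u v : R) : 0 < u -> 0 < v ->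
  (ln u + 1) * (v - u) <= xlnx v - xlnx u.
Proof.
move=> u_gt0 v_gt0; have := ln_le_subr1 (divr_gt0 u_gt0 v_gt0).
rewrite ln_div ?posrE // => /(ler_wpM2l (ltW v_gt0)).
have -> : v * (u / v - 1) = u - v by field; rewrite gt_eqF.
rewrite /xlnx; lra.
Qed.

End XlnX.

Section Phi.
Variables (R : realType) (d p : nat).
Implicit Types (x y : pt R p) (a b : bool).

(* [coord x a b l] is z_{l a b} for 0 <= l <= p, including the derived z_{0 a b}. *)
Definition coord x a b (l : 'I_p.+1) : R :=
  if unlift ord0 l is Some i then x.2 i a b else z0 x a b.

Lemma coordS x a b i : coord x a b (lift ord0 i) = x.2 i a b.
Proof. by rewrite /coord liftK. Qed.

Lemma coord0 x a b : coord x a b ord0 = z0 x a b.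
Proof. by rewrite /coord unlift_none. Qed.

Lemma sum_coord x a b :
  \sum_(l < p.+1) coord x a b l = if a == b then x.1 else 1 / 2 - x.1.
Proof.
rewrite big_ord_recl coord0; under eq_bigr do rewrite coordS.
by rewrite /z0; case: eqP => [<-|_]; ring.
Qed.

Lemma coord_ge0 x : inK x -> forall a b l, 0 <= coord x a b l.
Proof. by case=> _ _ w_ge0 z0_ge0 a b l; rewrite /coord; case: unlift. Qed.

Lemma inK_coord x : 0 <= x.1 <= 1 / 2 -> (forall a b l, 0 <= coord x a b l) ->
  inK x.
Proof.
move=> /andP[x1_ge0 x1_le] c_ge0; split=> // [i a b|a b].
  by rewrite -coordS.
by rewrite -coord0.
Qed.

Definition phi_term (l : 'I_p.+1) (z : R) : R := z * ln (tau R d p l) - xlnx z.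

Lemma phiE x : phi d x = xlnx (Afun d x) + xlnx (Bfun d x)
  + \sum_a \sum_b \sum_(l < p.+1) phi_term l (coord x a b l).
Proof.
congr (_ + _); apply: eq_bigr => a _; apply: eq_bigr => b _.
by rewrite big_ord_recl coord0; under [in RHS]eq_bigr do rewrite coordS.
Qed.

Definition wsum x a b : R := \sum_(i < p) i.+1%:R * x.2 i a b.

Lemma AfunE x : Afun d x = p%:R + (d%:R - 4 * p%:R) * x.1
  + (wsum x false false + wsum x true true - wsum x false true - wsum x true false).
Proof.
rewrite /Afun /wsum -big_split -!sumrB /=; congr (_ + _).
by apply: eq_bigr => i _; ring.
Qed.

Lemma wsum_ge0 x a b : inK x -> 0 <= wsum x a b.
Proof.
by case=> _ _ w_ge0 _; apply: sumr_ge0 => i _; rewrite mulr_ge0.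
Qed.

Lemma wsum_le x a b : inK x ->
  wsum x a b <= p%:R * (if a == b then x.1 else 1 / 2 - x.1).
Proof.
case=> _ _ w_ge0 /(_ a b) z0_ge0.
have w_le : wsum x a b <= p%:R * \sum_(i < p) x.2 i a b.
  rewrite /wsum mulr_sumr; apply: ler_sum => i _.
  by rewrite ler_wpM2r // ler_nat ltn_ord.
apply: (le_trans w_le); rewrite ler_wpM2l //.
by move: z0_ge0; rewrite /z0; case: eqP => [<-|_]; lra.
Qed.

Lemma Afun_ge x : inK x -> (d%:R - 2 * p%:R) * x.1 <= Afun d x.
Proof.
move=> xK; rewrite AfunE.
have := wsum_ge0 false false xK; have := wsum_ge0 true true xK.
have := wsum_le false true xK; have := wsum_le true false xK; rewrite /=.
lra.
Qed.

Lemma Bfun_ge x : inK x -> (d%:R - 2 * p%:R) * (1 / 2 - x.1) <= Bfun d x.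
Proof.
move=> xK; rewrite /Bfun AfunE.
have := wsum_ge0 false true xK; have := wsum_ge0 true false xK.
have := wsum_le false false xK; have := wsum_le true true xK; rewrite /=.
lra.
Qed.

Lemma close_inK x y m : (forall a b l, m <= coord x a b l) ->
  close x y (m / p.+1%:R) -> inK y.
Proof.
move=> c_ge [y1_near y2_near]; set r := m / p.+1%:R in y1_near y2_near.
have r_gt0 : 0 < r by apply: le_lt_trans y1_near.
have m_eq : m = r * p%:R + r.
  by rewrite mulr_natr -mulrSr -mulr_natr divfK ?pnatr_eq0.
have rp_ge0 : 0 <= r * p%:R by rewrite mulr_ge0 // ltW.
have x2_ge i a b : m <= x.2 i a b by rewrite -coordS.
have z0_ge a b : m <= z0 x a b by rewrite -coord0.
have y2_ge i a b : x.2 i a b - r <= y.2 i a b <= x.2 i a b + r.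
  have := y2_near i a b; rewrite ltr_norml => /andP[? ?].
  by apply/andP; split; lra.
have sum_x_ge0 a b : 0 <= \sum_(i < p) x.2 i a b.
  by apply: sumr_ge0 => i _; have := x2_ge i a b; lra.
have sum_y_le a b : \sum_(i < p) y.2 i a b <= \sum_(i < p) x.2 i a b + r * p%:R.
  have -> : r * p%:R = \sum_(i < p) r by rewrite sumr_const card_ord mulr_natr.
  rewrite -big_split.
  by apply: ler_sum => i _ /=; have /andP[] := y2_ge i a b.
have := z0_ge true true; have := z0_ge false true.
have := sum_x_ge0 true true; have := sum_x_ge0 false true.
move: y1_near; rewrite ltr_norml /z0 /= => /andP[? ?] ? ? ? ?.
split; [lra | lra | move=> i a b | move=> a b].
  by have := x2_ge i a b; have /andP[] := y2_ge i a b; lra.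
have := z0_ge a b; have := sum_y_le a b; rewrite /z0.
by case: eqP => [<-|_]; lra.
Qed.

Lemma boundary_coord_eq0 x : inK x -> on_boundaryK x ->
  exists a b l, coord x a b l = 0.
Proof.
move=> xK xb; pose c (q : bool * bool * 'I_p.+1) := coord x q.1.1 q.1.2 q.2.
case: (@arg_minP _ _ _ (false, false, ord0) xpredT c isT) => [[[a b] l] _ c_min].
exists a, b, l; apply/eqP; rewrite eq_le coord_ge0 // andbT leNgt.
apply/negP => m_gt0.
have [_ [y [xy yK]]] := xb _ (divr_gt0 m_gt0 (ltr0Sn _ p)).
by apply: yK (close_inK _ xy) => a' b' l'; apply: (c_min (a', b', l')).
Qed.

Lemma exists_coord_gt0 x a b : inK x -> 0 < x.1 -> x.1 < 1 / 2 ->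
  exists l, 0 < coord x a b l.
Proof.
move=> xK x1_gt0 x1_lt.
case: (boolP [exists l, 0 < coord x a b l]) => [/existsP //|].
rewrite negb_exists => /forallP c_le0.
have : 0 < \sum_(l < p.+1) coord x a b l by rewrite sum_coord; case: eqP; lra.
by rewrite ltNge sumr_le0 // => l _; rewrite leNgt c_le0.
Qed.

Hypothesis d_gt_2p : (p.*2 < d)%N.

Lemma d_sub_2p_gt0 : 0 < d%:R - 2 * p%:R :> R.
Proof. by rewrite subr_gt0 -[2]/(2%:R) -natrM mul2n ltr_nat. Qed.

Lemma Afun_gt0 x : inK x -> 0 < x.1 -> 0 < Afun d x.
Proof.
move=> xK x1_gt0; apply: lt_le_trans (Afun_ge xK).
by rewrite mulr_gt0 ?d_sub_2p_gt0.
Qed.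

Lemma Bfun_gt0 x : inK x -> x.1 < 1 / 2 -> 0 < Bfun d x.
Proof.
move=> xK x1_lt; apply: lt_le_trans (Bfun_ge xK).
by rewrite mulr_gt0 ?d_sub_2p_gt0 ?subr_gt0.
Qed.

Section Transfer.
Variables (a b : bool) (j k : 'I_p.+1).

Definition dir a' b' (l : 'I_p.+1) : R :=
  if (a' == a) && (b' == b) then (l == j)%:R - (l == k)%:R else 0.

(* Only the z_{l a b} with l >= 1 are coordinates of a point; z_{0 a b} follows
   through [z0]. *)
Definition transfer x t : pt R p :=
  (x.1, fun i a' b' => x.2 i a' b' + t * dir a' b' (lift ord0 i)).

Lemma sum_dir a' b' : \sum_(l < p.+1) dir a' b' l = 0.
Proof.
have sum_eq1 (m : 'I_p.+1) : \sum_(l < p.+1) ((l == m)%:R : R) = 1.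
  by rewrite (bigD1 m) //= eqxx big1 ?addr0 // => l /negbTE ->.
rewrite /dir; case: (_ && _); last exact: big1.
by rewrite sumrB !sum_eq1 subrr.
Qed.

Lemma normr_dir_le1 a' b' l : `|dir a' b' l| <= 1.
Proof.
by rewrite /dir; case: ifP => _; do ?case: eqP => _;
  rewrite /= ?subrr ?subr0 ?sub0r ?normrN ?normr0 ?normr1.
Qed.

Lemma coord_transfer x t a' b' l :
  coord (transfer x t) a' b' l = coord x a' b' l + t * dir a' b' l.
Proof.
case: (unliftP ord0 l) => [i ->|->]; first by rewrite !coordS.
have sum_dir_lift a'' b'' : \sum_(i < p) dir a'' b'' (lift ord0 i) = - dir a'' b'' ord0.
  by apply/eqP; rewrite -subr_eq0 opprK addrC -big_ord_recl sum_dir.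
rewrite !coord0 /z0 /=.
by case: eqP => [<-|_]; rewrite big_split /= -mulr_sumr sum_dir_lift; ring.
Qed.

Definition dirA : R := \sum_(i < p) i.+1%:R *
  (dir false false (lift ord0 i) + dir true true (lift ord0 i)
   - dir false true (lift ord0 i) - dir true false (lift ord0 i)).

Lemma Afun_transfer x t : Afun d (transfer x t) = Afun d x + t * dirA.
Proof.
rewrite /Afun /dirA /= mulr_sumr -!addrA -big_split /=; congr (_ + (_ + _)).
by apply: eq_bigr => i _; ring.
Qed.

Lemma Bfun_transfer x t : Bfun d (transfer x t) = Bfun d x - t * dirA.
Proof. by rewrite /Bfun Afun_transfer; ring. Qed.

Lemma transfer_inK x t : inK x -> 0 <= t <= coord x a b k ->
  inK (transfer x t).
Proof.
move=> xK /andP[t_ge0 t_le]; have [x1_ge0 x1_le _ _] := xK.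
apply: inK_coord => [|a' b' l]; first by apply/andP.
rewrite coord_transfer /dir; have := coord_ge0 xK a' b' l.
case: ifP => [/andP[/eqP-> /eqP->]|_]; last by rewrite mulr0 addr0.
by case: eqP => [->|_]; case: eqP => [->|_]; rewrite /=; lra.
Qed.

Lemma close_transfer x t e : 0 < t < e -> close x (transfer x t) e.
Proof.
move=> /andP[t_gt0 t_lt]; split=> [|i a' b'].
  by rewrite subrr normr0 (lt_trans t_gt0 t_lt).
rewrite /= opprD addrA subrr add0r normrN normrM gtr0_norm //.
apply: le_lt_trans _ t_lt; exact: ler_piMr (ltW t_gt0) (normr_dir_le1 _ _ _).
Qed.

Lemma phi_transfer x t : k != j ->
  phi d (transfer x t) - phi d x =
    (xlnx (Afun d x + t * dirA) - xlnx (Afun d x))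
  + (xlnx (Bfun d x - t * dirA) - xlnx (Bfun d x))
  + (phi_term j (coord x a b j + t) - phi_term j (coord x a b j))
  + (phi_term k (coord x a b k - t) - phi_term k (coord x a b k)).
Proof.
move=> kj; set y := transfer x t.
have block_diff a' b' : \sum_(l < p.+1) phi_term l (coord y a' b' l)
    - \sum_(l < p.+1) phi_term l (coord x a' b' l)
  = \sum_(l < p.+1) (phi_term l (coord x a' b' l + t * dir a' b' l)
                     - phi_term l (coord x a' b' l)).
  by rewrite -sumrB; apply: eq_bigr => l _; rewrite coord_transfer.
have idle a' b' : ~~ ((a' == a) && (b' == b)) ->
  \sum_(l < p.+1) phi_term l (coord y a' b' l)
    - \sum_(l < p.+1) phi_term l (coord x a' b' l) = 0.
  move=> /negbTE ab; rewrite block_diff; apply: big1 => l _.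
  by rewrite /dir ab mulr0 addr0 subrr.
have blocks : \sum_a' \sum_b' \sum_(l < p.+1) phi_term l (coord y a' b' l)
    - \sum_a' \sum_b' \sum_(l < p.+1) phi_term l (coord x a' b' l)
  = (phi_term j (coord x a b j + t) - phi_term j (coord x a b j))
  + (phi_term k (coord x a b k - t) - phi_term k (coord x a b k)).
  rewrite -sumrB (bigD1 a) //= [X in _ + X]big1 => [|a' a'a]; last first.
    by rewrite -sumrB; apply: big1 => b' _; rewrite idle // (negbTE a'a).
  rewrite addr0 -sumrB (bigD1 b) //= [X in _ + X]big1 => [|b' b'b]; last first.
    by rewrite idle // eqxx (negbTE b'b).
  have dir_j : dir a b j = 1 by rewrite /dir !eqxx eq_sym (negbTE kj) subr0.
  have dir_k : dir a b k = -1 by rewrite /dir !eqxx (negbTE kj) sub0r.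
  rewrite addr0 block_diff (bigD1 j) //= (bigD1 k) //= big1 => [|l /andP[lj lk]].
    by rewrite dir_j dir_k mulr1 mulrN1 addr0.
  by rewrite /dir !eqxx (negbTE lj) (negbTE lk) subrr mulr0 addr0 subrr.
rewrite !phiE Afun_transfer Bfun_transfer; move: blocks; lra.
Qed.

Lemma phi_transfer_gt x : inK x -> 0 < x.1 -> x.1 < 1 / 2 ->
  coord x a b j = 0 -> 0 < coord x a b k ->
  exists2 t0, 0 < t0 & forall t, 0 < t <= t0 -> phi d x < phi d (transfer x t).
Proof.
move=> xK x1_gt0 x1_lt cj0 ck_gt0.
have kj : k != j by apply: contraTneq ck_gt0 => ->; rewrite cj0 ltxx.
set A := Afun d x; set B := Bfun d x; set ck := coord x a b k.
have A_gt0 : 0 < A := Afun_gt0 xK x1_gt0.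
have B_gt0 : 0 < B := Bfun_gt0 xK x1_lt.
(* For t <= ck / 2, convexity of x ln x bounds the increase of φ below by t (C - ln t);
   t <= exp (C - 1) then makes it at least t. *)
pose C := dirA * (ln A - ln B) + ln (tau R d p j) - ln (tau R d p k) + ln (ck / 2) + 1.
exists (Num.min (ck / 2) (expR (C - 1))); first by rewrite lt_min divr_gt0 ?expR_gt0.
move=> t /andP[t_gt0]; rewrite le_min => /andP[t_le_ck t_le_expC].
have yK : inK (transfer x t).
  by apply: (transfer_inK xK); apply/andP; split; [lra | rewrite -/ck; lra].
have Ay_gt0 : 0 < A + t * dirA by rewrite -Afun_transfer; apply: Afun_gt0 yK x1_gt0.
have By_gt0 : 0 < B - t * dirA by rewrite -Bfun_transfer; apply: Bfun_gt0 yK x1_lt.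
have ck_t_gt0 : 0 < ck - t by lra.
have hA := xlnx_tangent_le A_gt0 Ay_gt0.
have hB := xlnx_tangent_le B_gt0 By_gt0.
have hk := xlnx_tangent_le ck_t_gt0 ck_gt0.
have ln_ck : t * ln (ck / 2) <= t * ln (ck - t).
  by rewrite ler_pM2l // ler_ln ?posrE ?divr_gt0 //; lra.
have ln_t : t * ln t <= t * (C - 1).
  by rewrite ler_pM2l // -[C - 1]expRK ler_ln ?posrE ?expR_gt0.
rewrite -subr_gt0 phi_transfer // cj0 add0r -/A -/B -/ck /phi_term /xlnx !mul0r.
rewrite /xlnx in hA hB hk; rewrite -/ck in hk; rewrite /C in ln_t; lra.
Qed.

End Transfer.

End Phi.

Theorem lemmaA4 (R : realType) (d p : nat) (x : pt R p) :
  (4 <= d)%N -> (1 <= p)%N -> (p.*2 < d)%N ->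
  @on_boundaryK R p x -> x.1 != 0 -> x.1 != 1 / 2 ->
  ~ @local_max_on_K R d p x.
Proof.
move=> _ _ d_gt_2p xb x1_neq0 x1_neq_half [xK [e [e_gt0 x_max]]].
have [x1_ge0 x1_le _ _] := xK.
have x1_gt0 : 0 < x.1 by rewrite lt_neqAle eq_sym x1_neq0.
have x1_lt : x.1 < 1 / 2 by rewrite lt_neqAle x1_neq_half.
have [a [b [j cj0]]] := boundary_coord_eq0 xK xb.
have [k ck_gt0] := exists_coord_gt0 a b xK x1_gt0 x1_lt.
have [t0 t0_gt0 gain] := phi_transfer_gt d_gt_2p xK x1_gt0 x1_lt cj0 ck_gt0.
pose t := Num.min (e / 2) (Num.min t0 (coord x a b k)).
have t_gt0 : 0 < t by rewrite /t !lt_min t0_gt0 ck_gt0 divr_gt0.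
have t_lt_e : t < e by rewrite /t gt_min; apply/orP; left; lra.
have t_le_t0 : t <= t0 by rewrite /t !ge_min lexx !orbT.
have t_le_ck : t <= coord x a b k by rewrite /t !ge_min lexx !orbT.
have : phi d (transfer a b j k x t) <= phi d x.
  apply: x_max; first by apply: transfer_inK => //; rewrite (ltW t_gt0) t_le_ck.
  by apply: close_transfer; rewrite t_gt0.
by rewrite leNgt gain // t_gt0.
Qed.
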